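(* For real numbers $t_1,t_2,t_3$, let $$\rho_{AB}=\tfrac18\,\mathbb{1}_2\otimes\mathbb{1}_4+\tfrac14\big(t_1\,\sigma_1\otimes\lambda_1+t_2\,\sigma_2\otimes\lambda_{13}+t_3\,\sigma_3\otimes\lambda_3\big).$$ Suppose there exist nonzero real numbers $\alpha_1,\alpha_2,\alpha_3$ with $$\alpha_1^2+\alpha_2^2+\alpha_3^2\le1,\qquad \frac{t_1^2}{\alpha_1^2}+\frac{t_3^2}{\alpha_3^2}\le\frac14,\qquad \frac{t_2^2}{\alpha_2^2}\le\frac14 .$$ Then $\rho_{AB}$ is a separable state. Explicitly, put $\beta_\mu=t_\mu/\alpha_\mu$ and define four sign patterns $$\vec\epsilon^{(1)}=(1,-1,-1),\quad \vec\epsilon^{(2)}=(-1,-1,1),\quad \vec\epsilon^{(3)}=(-1,1,-1),\quad \vec\epsilon^{(4)}=(1,1,1).$$ Then $\rho_{AB}=\sum_{i=1}^4\frac14\,\rho_i^{(A)}\otimes\rho_i^{(B)}$, where $$\rho_i^{(A)}=\tfrac12\mathbb{1}+\tfrac12\big(\epsilon^{(i)}_1\alpha_1\sigma_1+\epsilon^{(i)}_2\alpha_2\sigma_2+\epsilon^{(i)}_3\alpha_3\sigma_3\big),$$ $$\rho_i^{(B)}=\tfrac14\mathbb{1}+\tfrac12\big(\epsilon^{(i)}_1\beta_1\lambda_1+\epsilon^{(i)}_2\beta_2\lambda_{13}+\epsilon^{(i)}_3\beta_3\lambda_3\big),$$ and all of these are density matrices.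
   Context: $\sigma_1,\sigma_2,\sigma_3$ are the Pauli matrices. With $\{|1\rangle,|2\rangle,|3\rangle,|4\rangle\}$ the standard basis of $\mathbb{C}^4$, the SU(4) generalized Gell-Mann matrices used here are: - $\lambda_1=|1\rangle\langle2|+|2\rangle\langle1|$, - $\lambda_3=|1\rangle\langle1|-|2\rangle\langle2|$, - $\lambda_{13}=|3\rangle\langle4|+|4\rangle\langle3|$. A state is separable if it is a convex combination of tensor products of density matrices. *)

(* Complex scalars: an arbitrary numClosedFieldType C
   (e.g. the complex numbers); "real numbers" are elements of C that are
   \is Num.real. *)
From HB Require Import structures.
From mathcomp Require Import all_boot all_order all_algebra.
Set Implicit Arguments. Unset Strict Implicit. Unset Printing Implicit Defensive.
Import Order.TTheory GRing.Theory Num.Theory.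
Local Open Scope ring_scope.

Section Defs.
Variable C : numClosedFieldType.

Lemma kron_divP (m p : nat) (i : 'I_(m * p)) : (i %/ p < m)%N.
Proof.
case: p i => [|p] i; first by case: i; rewrite muln0.
by rewrite ltn_divLR // ltn_ord.
Qed.

Lemma kron_modP (m p : nat) (i : 'I_(m * p)) : (i %% p < p)%N.
Proof.
case: p i => [|p] i; first by case: i; rewrite muln0.
by rewrite ltn_mod.
Qed.

(* Kronecker product: (A (x) B)_{(i1 p + i2),(j1 q + j2)} = A_{i1 j1} B_{i2 j2} *)
Definition kron (m n p q : nat) (A : 'M[C]_(m, n)) (B : 'M[C]_(p, q))
  : 'M[C]_(m * p, n * q) :=
  \matrix_(i, j) (A (Ordinal (kron_divP i)) (Ordinal (kron_divP j)) *
                  B (Ordinal (kron_modP i)) (Ordinal (kron_modP j))).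

Definition adjmx (m n : nat) (A : 'M[C]_(m, n)) : 'M[C]_(n, m) :=
  (map_mx (@Num.conj C) A)^T.

Definition hermitian (n : nat) (A : 'M[C]_n) : Prop := adjmx A = A.

Definition psd (n : nat) (A : 'M[C]_n) : Prop :=
  forall v : 'cV[C]_n, 0 <= (adjmx v *m A *m v) ord0 ord0.

Definition density (n : nat) (A : 'M[C]_n) : Prop :=
  [/\ hermitian A, psd A & \tr A = 1].

Definition separable (m p : nat) (rho : 'M[C]_(m * p)) : Prop :=
  exists (k : nat) (w : 'I_k -> C) (RA : 'I_k -> 'M[C]_m) (RB : 'I_k -> 'M[C]_p),
    [/\ forall i, 0 <= w i,
        \sum_i w i = 1,
        forall i, density (RA i) /\ density (RB i)
      & rho = \sum_i w i *: kron (RA i) (RB i)].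

Definition sigma1 : 'M[C]_2 :=
  \matrix_(i, j) (if (i : nat) != j then 1 else 0).
Definition sigma2 : 'M[C]_2 :=
  \matrix_(i, j) (if ((i : nat) == 0) && ((j : nat) == 1) then - 'i
                  else if ((i : nat) == 1) && ((j : nat) == 0) then 'i else 0).
Definition sigma3 : 'M[C]_2 :=
  \matrix_(i, j) (if (i : nat) == j then (if (i : nat) == 0 then 1 else -1) else 0).

(* Gell-Mann matrices of SU(4); basis |1>,..,|4> = indices 0..3 *)
Definition lambda1 : 'M[C]_4 :=
  \matrix_(i, j) (if (((i : nat) == 0) && ((j : nat) == 1)) ||
                     (((i : nat) == 1) && ((j : nat) == 0)) then 1 else 0).
Definition lambda3 : 'M[C]_4 :=
  \matrix_(i, j) (if ((i : nat) == 0) && ((j : nat) == 0) then 1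
                  else if ((i : nat) == 1) && ((j : nat) == 1) then -1 else 0).
Definition lambda13 : 'M[C]_4 :=
  \matrix_(i, j) (if (((i : nat) == 2) && ((j : nat) == 3)) ||
                     (((i : nat) == 3) && ((j : nat) == 2)) then 1 else 0).

Definition rhoAB (t1 t2 t3 : C) : 'M[C]_(2 * 4) :=
  (1 / 8) *: kron (1%:M : 'M[C]_2) (1%:M : 'M[C]_4)
  + (1 / 4) *: (t1 *: kron sigma1 lambda1 + t2 *: kron sigma2 lambda13
                + t3 *: kron sigma3 lambda3).

(* sign patterns epsilon^(i), i = 1..4 (indexed 0..3), components mu = 1..3 *)
Definition eps (i : 'I_4) : C * C * C :=
  match val i with
  | 0 => (1, -1, -1)
  | 1 => (-1, -1, 1)
  | 2 => (-1, 1, -1)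
  | _ => (1, 1, 1)
  end.

Definition rhoA (a1 a2 a3 : C) (i : 'I_4) : 'M[C]_2 :=
  let: (e1, e2, e3) := eps i in
  (1 / 2) *: 1%:M + ((1 / 2) * (e1 * a1)) *: sigma1
  + ((1 / 2) * (e2 * a2)) *: sigma2 + ((1 / 2) * (e3 * a3)) *: sigma3.

Definition rhoB (b1 b2 b3 : C) (i : 'I_4) : 'M[C]_4 :=
  let: (e1, e2, e3) := eps i in
  (1 / 4) *: 1%:M + ((1 / 2) * (e1 * b1)) *: lambda1
  + ((1 / 2) * (e2 * b2)) *: lambda13 + ((1 / 2) * (e3 * b3)) *: lambda3.

End Defs.

From Pilot Require Import Defs.
From HB Require Import structures.
From mathcomp Require Import all_boot all_order all_algebra ring.
Import Order.TTheory GRing.Theory Num.Theory.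
Set Implicit Arguments. Unset Strict Implicit. Unset Printing Implicit Defensive.
Local Open Scope ring_scope.

(** Each rho_i^(A) is a qubit state whose Bloch vector (e1 a1, e2 a2, e3 a3)
    has length at most 1, and each rho_i^(B) is block diagonal with two 2x2
    blocks, on span{|1>,|2>} and span{|3>,|4>}, which are positive exactly
    when b1^2 + b3^2 <= 1/4 and b2^2 <= 1/4.  A Hermitian 2x2 block with
    positive trace and nonnegative determinant is positive semidefinite since
    (p + r) v^* M v is a sum of squares.  The decomposition itself holds
    because the sign patterns satisfy sum_i e_mu^(i) = 0 and
    sum_i e_mu^(i) e_nu^(i) = 4 delta_mu,nu: averaging the product states
    keeps only the identity and the correlations a_mu b_mu = t_mu. *)

Section QuantumStates.
Variable C : numClosedFieldType.
Implicit Types (p q r x y z : C).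

Lemma real_1_div_natr (n : nat) : (1 / n%:R : C) \is Num.real.
Proof. by rewrite div1r rpredV realn. Qed.

Lemma real_half_mul x : x \is Num.real -> 1 / 2 * x \is Num.real.
Proof. by move=> Rx; rewrite rpredM // real_1_div_natr. Qed.

Lemma adjmxD m n (A B : 'M[C]_(m, n)) : adjmx (A + B) = adjmx A + adjmx B.
Proof. by apply/matrixP => i j; rewrite !mxE rmorphD. Qed.

Lemma adjmxZ m n c (A : 'M[C]_(m, n)) : adjmx (c *: A) = c^* *: adjmx A.
Proof. by apply/matrixP => i j; rewrite !mxE rmorphM. Qed.

Lemma hermitianD n (A B : 'M[C]_n) :
  Defs.hermitian A -> Defs.hermitian B -> Defs.hermitian (A + B).
Proof. by move=> hA hB; rewrite /Defs.hermitian adjmxD hA hB. Qed.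

Lemma hermitianZ n c (A : 'M[C]_n) :
  c \is Num.real -> Defs.hermitian A -> Defs.hermitian (c *: A).
Proof. by move=> Rc hA; rewrite /Defs.hermitian adjmxZ hA (conj_Creal Rc). Qed.

Lemma hermitian1 n : Defs.hermitian (1%:M : 'M[C]_n).
Proof. by apply/matrixP => i j; rewrite !mxE conjC_nat eq_sym. Qed.

Lemma hermitian_sigma1 : Defs.hermitian (sigma1 C).
Proof. by apply/matrixP => -[[|[|//]] ?] [[|[|//]] ?]; rewrite !mxE /= ?conjC0 ?conjC1. Qed.

Lemma hermitian_sigma2 : Defs.hermitian (sigma2 C).
Proof. by apply/matrixP => -[[|[|//]] ?] [[|[|//]] ?]; rewrite !mxE /= ?conjC0 ?raddfN /= ?conjCi ?opprK. Qed.

Lemma hermitian_sigma3 : Defs.hermitian (sigma3 C).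
Proof. by apply/matrixP => -[[|[|//]] ?] [[|[|//]] ?]; rewrite !mxE /= ?conjC0 ?conjCN1 ?conjC1. Qed.

Lemma hermitian_lambda1 : Defs.hermitian (lambda1 C).
Proof. by apply/matrixP => -[[|[|[|[|//]]]] ?] [[|[|[|[|//]]]] ?]; rewrite !mxE /= ?conjC0 ?conjC1. Qed.

Lemma hermitian_lambda13 : Defs.hermitian (lambda13 C).
Proof. by apply/matrixP => -[[|[|[|[|//]]]] ?] [[|[|[|[|//]]]] ?]; rewrite !mxE /= ?conjC0 ?conjC1. Qed.

Lemma hermitian_lambda3 : Defs.hermitian (lambda3 C).
Proof. by apply/matrixP => -[[|[|[|[|//]]]] ?] [[|[|[|[|//]]]] ?]; rewrite !mxE /= ?conjC0 ?conjC1 ?conjCN1. Qed.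

Lemma hermitian_form2_ge0 p q r x y :
  p \is Num.real -> r \is Num.real -> 0 < p + r -> q * q^* <= p * r ->
  0 <= (x^* * p + y^* * q^*) * x + (x^* * q + y^* * r) * y.
Proof.
move=> Rp Rr trM detM; set E := _ + _.
have sos : (p + r) * E = (p * x + q * y) * (p * x + q * y)^*
    + (q^* * x + r * y) * (q^* * x + r * y)^* + (p * r - q * q^*) * (x * x^* + y * y^*).
  by rewrite /E !rmorphD !rmorphM /= conjCK (conj_Creal Rp) (conj_Creal Rr); ring.
have -> : E = (p + r) * E / (p + r) by rewrite [_ * E]mulrC mulfK ?gt_eqF.
rewrite sos; apply: divr_ge0; last exact: ltW.
apply: addr_ge0; first by apply: addr_ge0; apply: mul_conjC_ge0.
by rewrite mulr_ge0 ?subr_ge0 // addr_ge0 ?mul_conjC_ge0.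
Qed.

Lemma psd_mx2 (M : 'M[C]_2) :
  Defs.hermitian M -> 0 < \tr M -> M 0 1 * M 1 0 <= M 0 0 * M 1 1 -> psd M.
Proof.
move=> hM trM detM v.
have hE i j : M j i = (M i j)^* by rewrite -[in LHS]hM !mxE.
have Rd i : M i i \is Num.real by rewrite CrealE -hE.
have i0 : widen_ord (leqnSn 1) ord_max = 0 :> 'I_2 by apply: val_inj.
have i1 : ord_max = 1 :> 'I_2 by apply: val_inj.
rewrite /mxtrace !big_ord_recr big_ord0 /= add0r i0 i1 in trM.
rewrite !mxE !big_ord_recr !big_ord0 /= !add0r !mxE !big_ord_recr !big_ord0 /= !add0r !mxE i0 i1.
rewrite [M 1 0]hE in detM *.
exact: hermitian_form2_ge0.
Qed.

Definition qubit_state x y z : 'M[C]_2 :=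
  (1 / 2) *: 1%:M + (1 / 2 * x) *: sigma1 C + (1 / 2 * y) *: sigma2 C
  + (1 / 2 * z) *: sigma3 C.

Lemma qubit_state_density x y z :
  x \is Num.real -> y \is Num.real -> z \is Num.real ->
  x ^+ 2 + y ^+ 2 + z ^+ 2 <= 1 -> density (qubit_state x y z).
Proof.
move=> Rx Ry Rz bloch.
have hM : Defs.hermitian (qubit_state x y z).
  rewrite /qubit_state; repeat apply: hermitianD; apply: hermitianZ;
  by [apply: real_half_mul | apply: real_1_div_natr | apply: hermitian1
     | apply: hermitian_sigma1 | apply: hermitian_sigma2 | apply: hermitian_sigma3].
have trM : \tr (qubit_state x y z) = 1.
  by rewrite /mxtrace !big_ord_recr big_ord0 /= !mxE /=; field.
split=> //; apply: psd_mx2 => //; first by rewrite trM ltr01.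
rewrite !mxE /= -subr_ge0.
rewrite (_ : _ - _ = (1 - (x ^+ 2 + y ^+ 2 + z ^+ 2)) / 4 + y ^+ 2 / 4 * ('i ^+ 2 + 1)); last by field.
by rewrite sqrCi addNr mulr0 addr0 divr_ge0 ?subr_ge0.
Qed.

Definition ququart_state x y z : 'M[C]_4 :=
  (1 / 4) *: 1%:M + (1 / 2 * x) *: lambda1 C + (1 / 2 * y) *: lambda13 C
  + (1 / 2 * z) *: lambda3 C.

Lemma ququart_state_psd x y z :
  x \is Num.real -> y \is Num.real -> z \is Num.real ->
  x ^+ 2 + z ^+ 2 <= 1 / 4 -> y ^+ 2 <= 1 / 4 -> psd (ququart_state x y z).
Proof.
move=> Rx Ry Rz xz_le y_le v.
rewrite !mxE !big_ord_recr !big_ord0 /= !add0r !mxE !big_ord_recr !big_ord0 /= !add0r !mxE /=.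
set v0 := v _ ord0; set v1 := v _ ord0; set v2 := v _ ord0; set v3 := v _ ord0.
have Rhx := real_half_mul Rx; have Rhy := real_half_mul Ry.
have block_xz : 0 <= (v0^* * (1 / 4 + 1 / 2 * z) + v1^* * (1 / 2 * x)^*) * v0
                     + (v0^* * (1 / 2 * x) + v1^* * (1 / 4 - 1 / 2 * z)) * v1.
  apply: hermitian_form2_ge0.
  - by apply: rpredD; rewrite ?real_1_div_natr ?real_half_mul.
  - by apply: rpredB; rewrite ?real_1_div_natr ?real_half_mul.
  - by rewrite addrACA subrr addr0 addr_gt0 // divr_gt0 ?ltr0n.
  rewrite (conj_Creal Rhx) -subr_ge0 (_ : _ - _ = (1 / 4 - (x ^+ 2 + z ^+ 2)) / 4).
    by rewrite divr_ge0 ?subr_ge0.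
  by field.
have block_y : 0 <= (v2^* * (1 / 4) + v3^* * (1 / 2 * y)^*) * v2
                    + (v2^* * (1 / 2 * y) + v3^* * (1 / 4)) * v3.
  apply: hermitian_form2_ge0; rewrite ?real_1_div_natr //.
    by rewrite addr_gt0 // divr_gt0 ?ltr0n.
  rewrite (conj_Creal Rhy) -subr_ge0 (_ : _ - _ = (1 / 4 - y ^+ 2) / 4).
    by rewrite divr_ge0 ?subr_ge0.
  by field.
apply: le_trans (addr_ge0 block_xz block_y) _.
rewrite (conj_Creal Rhx) (conj_Creal Rhy) le_eqVlt; apply/orP; left; apply/eqP.
by field.
Qed.

Lemma ququart_state_density x y z :
  x \is Num.real -> y \is Num.real -> z \is Num.real ->
  x ^+ 2 + z ^+ 2 <= 1 / 4 -> y ^+ 2 <= 1 / 4 -> density (ququart_state x y z).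
Proof.
move=> Rx Ry Rz xz_le y_le; split.
- rewrite /ququart_state; repeat apply: hermitianD; apply: hermitianZ;
  by [apply: real_half_mul | apply: real_1_div_natr | apply: hermitian1
     | apply: hermitian_lambda1 | apply: hermitian_lambda13 | apply: hermitian_lambda3].
- exact: ququart_state_psd.
- by rewrite /mxtrace !big_ord_recr big_ord0 /= !mxE /=; field.
Qed.

Lemma separable_uniform_mixture k (RA : 'I_k -> 'M[C]_2) (RB : 'I_k -> 'M[C]_4) :
  (0 < k)%N -> (forall i, density (RA i) /\ density (RB i)) ->
  separable (\sum_(i < k) (1 / k%:R) *: kron (RA i) (RB i)).
Proof.
move=> k_gt0 dens; exists k, (fun=> 1 / k%:R), RA, RB; split=> //.
- by move=> _; rewrite divr_ge0 ?ler0n.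
- by rewrite sumr_const card_ord div1r -[_ *+ k]mulr_natr mulVf ?pnatr_eq0 -?lt0n.
Qed.

Lemma density_rhoA (a1 a2 a3 : C) i :
  a1 \is Num.real -> a2 \is Num.real -> a3 \is Num.real ->
  a1 ^+ 2 + a2 ^+ 2 + a3 ^+ 2 <= 1 -> density (rhoA a1 a2 a3 i).
Proof.
move=> Ra1 Ra2 Ra3 a_le; rewrite /rhoA.
by case: i => -[|[|[|[|//]]]] _ /=; apply: qubit_state_density;
  rewrite ?mulN1r ?mul1r ?rpredN ?sqrrN.
Qed.

Lemma density_rhoB (b1 b2 b3 : C) i :
  b1 \is Num.real -> b2 \is Num.real -> b3 \is Num.real ->
  b1 ^+ 2 + b3 ^+ 2 <= 1 / 4 -> b2 ^+ 2 <= 1 / 4 -> density (rhoB b1 b2 b3 i).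
Proof.
move=> Rb1 Rb2 Rb3 b13_le b2_le; rewrite /rhoB.
by case: i => -[|[|[|[|//]]]] _ /=; apply: ququart_state_density;
  rewrite ?mulN1r ?mul1r ?rpredN ?sqrrN // -div1r. (* mul1r also turned 1 / 4 into 4^-1 *)
Qed.

Lemma rhoAB_decomposition (t1 t2 t3 a1 a2 a3 : C) :
  a1 != 0 -> a2 != 0 -> a3 != 0 ->
  rhoAB t1 t2 t3
  = \sum_(i < 4) (1 / 4) *: kron (rhoA a1 a2 a3 i) (rhoB (t1 / a1) (t2 / a2) (t3 / a3) i).
Proof.
move=> a1_neq0 a2_neq0 a3_neq0.
apply/matrixP => i j; rewrite summxE !big_ord_recr big_ord0 /= !mxE.
by case: i => -[|[|[|[|[|[|[|[|//]]]]]]]] ?; case: j => -[|[|[|[|[|[|[|[|//]]]]]]]] ?;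
  rewrite /= ?mxE /=; field; rewrite ?a1_neq0 ?a2_neq0 ?a3_neq0.
Qed.

End QuantumStates.

Theorem mainTheorem4 (C : numClosedFieldType) (t1 t2 t3 a1 a2 a3 : C) :
  t1 \is Num.real -> t2 \is Num.real -> t3 \is Num.real ->
  a1 \is Num.real -> a2 \is Num.real -> a3 \is Num.real ->
  a1 != 0 -> a2 != 0 -> a3 != 0 ->
  a1 ^+ 2 + a2 ^+ 2 + a3 ^+ 2 <= 1 ->
  t1 ^+ 2 / a1 ^+ 2 + t3 ^+ 2 / a3 ^+ 2 <= 1 / 4 ->
  t2 ^+ 2 / a2 ^+ 2 <= 1 / 4 ->
  separable (rhoAB t1 t2 t3)
  /\ (let b1 := t1 / a1 in let b2 := t2 / a2 in let b3 := t3 / a3 in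
      rhoAB t1 t2 t3 = \sum_(i < 4) (1 / 4) *: kron (rhoA a1 a2 a3 i) (rhoB b1 b2 b3 i)
      /\ forall i : 'I_4, density (rhoA a1 a2 a3 i) /\ density (rhoB b1 b2 b3 i)).
Proof.
move=> Rt1 Rt2 Rt3 Ra1 Ra2 Ra3 a1_neq0 a2_neq0 a3_neq0 a_le b13_le b2_le.
have states i : density (rhoA a1 a2 a3 i) /\ density (rhoB (t1 / a1) (t2 / a2) (t3 / a3) i).
  by split; [apply: density_rhoA | apply: density_rhoB; rewrite ?rpred_div ?expr_div_n].
have decomp := rhoAB_decomposition t1 t2 t3 a1_neq0 a2_neq0 a3_neq0.
by split; [rewrite decomp; apply: separable_uniform_mixture | split].
Qed.
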